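(* Let $0<\mu<1$, $\bar\mu=1-\mu$, $0\le\lambda<1$, and let $\theta(t)$ be the largest eigenvalue of $G_t=D_t[\gamma_1\gamma_1'+\lambda(I-\gamma_1\gamma_1')]D_t$, where $D_t=\mathrm{diag}(1,e^{t/2})$ and $\gamma_1=(\sqrt{\bar\mu},\sqrt\mu)'$. Define $I_\theta(x)=\sup_{t\in\mathbb R}\{tx-\log\theta(t)\}$. Then for every $x\in(0,1)$, with $\bar x=1-x$ and $\Delta=1+\dfrac{4\lambda x\bar x}{\mu\bar\mu(1-\lambda)^2}$, $$I_\theta(x)=-x\log\left[\frac{\mu+\bar\mu\lambda}{1-2\bar x/(\sqrt\Delta+1)}\right]-\bar x\log\left[\frac{\bar\mu+\mu\lambda}{1-2x/(\sqrt\Delta+1)}\right],$$ the supremum being attained at $t_0=\log\left[\dfrac{(\bar\mu+\mu\lambda)[\sqrt\Delta-(\bar x-x)]}{(\mu+\bar\mu\lambda)[\sqrt\Delta+(\bar x-x)]}\right]$.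
   Context: $I$ is the $2\times2$ identity matrix. $\theta(t)$ is the Perron eigenvalue governing the moment generating function of partial sums of the stationary two-state Markov chain on $\{0,1\}$ with transition matrix $\lambda I+(1-\lambda)\mathbf 1(\bar\mu,\mu)$, where $\mathbf 1=(1,1)'$. *)

From HB Require Import structures.
From mathcomp Require Import all_boot all_order all_algebra.
From mathcomp Require Import all_classical all_reals all_analysis.
Set Implicit Arguments. Unset Strict Implicit. Unset Printing Implicit Defensive.
Import Order.TTheory GRing.Theory Num.Theory.
Local Open Scope classical_set_scope.
Local Open Scope ring_scope.

Definition gamma1 (R : realType) (mu : R) : 'cV[R]_2 :=
  \col_(i < 2) (if i == ord0 then Num.sqrt (1 - mu) else Num.sqrt mu).

Definition Dmat (R : realType) (t : R) : 'M[R]_2 :=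
  diag_mx (\row_(i < 2) (if i == ord0 then 1 else expR (t / 2))).

Definition Gmat (R : realType) (mu lam t : R) : 'M[R]_2 :=
  let P := gamma1 mu *m (gamma1 mu)^T in
  Dmat t *m (P + lam *: (1%:M - P)) *m Dmat t.

Definition is_largest_eigenvalue (R : realType) (A : 'M[R]_2) (a : R) : Prop :=
  eigenvalue A a /\ (forall b : R, eigenvalue A b -> b <= a).

Definition I_theta (R : realType) (theta : R -> R) (x : R) : R :=
  sup (range (fun t : R => t * x - ln (theta t))).

(** [theta t] is the larger root of [z^2 - (A + e^t B) z + lam e^t], the characteristic
    polynomial of [G_t], where [A = mub + mu lam] and [B = mu + mub lam].  At [t0] the
    two roots [z0 >= k0] satisfy [(1 - x) z0 + x k0 = A] and [x z0 + (1 - x) k0 = e^t0 B].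
    Convexity of [expR] then makes the quadratic at [t] nonpositive at [z0 e^(x (t - t0))],
    so [log theta] stays above its tangent of slope [x] at [t0], and [t x - log theta t]
    attains its supremum at [t0]. *)
From mathcomp Require Import all_boot all_order all_algebra.
From mathcomp Require Import all_classical all_reals all_analysis.
From mathcomp Require Import ring lra.
Set Implicit Arguments. Unset Strict Implicit. Unset Printing Implicit Defensive.
Import Order.TTheory GRing.Theory Num.Theory.
Local Open Scope ring_scope.

Lemma det_mx2 (R : comNzRingType) (A : 'M[R]_2) :
  \det A = A 0 0 * A 1 1 - A 0 1 * A 1 0.
Proof.
rewrite (expand_det_row _ 0) !big_ord_recl big_ord0 addr0 /cofactor !det_mx11.
rewrite !mxE /bump /= expr0 expr1 mul1r mulN1r mulrN.
by congr (A _ _ * A _ _ - A _ _ * A _ _); exact: val_inj.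
Qed.

Lemma mxtrace_mx2 (R : nmodType) (A : 'M[R]_2) : \tr A = A 0 0 + A 1 1.
Proof.
rewrite /mxtrace !big_ord_recl big_ord0 addr0.
by congr (A _ _ + A _ _); exact: val_inj.
Qed.

Lemma char_poly_mx2 (R : comNzRingType) (A : 'M[R]_2) :
  char_poly A = 'X^2 - (\tr A) *: 'X + (\det A)%:P.
Proof.
have sz := size_char_poly A.
have lead : (char_poly A)`_2 = 1.
  by rewrite -(monicP (char_poly_monic A)) /lead_coef sz.
apply/polyP => -[|[|[|i]]]; rewrite coefD coefB coefZ coefX coefXn coefC /=.
- by rewrite char_poly_det; ring.
- by rewrite char_poly_trace //; ring.
- by rewrite lead; ring.
- by rewrite nth_default ?sz //; ring.
Qed.

Lemma eigenvalue_mx2 (F : fieldType) (A : 'M[F]_2) z :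
  eigenvalue A z = (z ^+ 2 - \tr A * z + \det A == 0).
Proof. by rewrite eigenvalue_root_char char_poly_mx2 /root !hornerE. Qed.

Definition larger_root {R : numDomainType} (T p z : R) : Prop :=
  z ^+ 2 - T * z + p = 0 /\ T <= 2 * z.

Section LargerRoot.
Variable R : realFieldType.
Implicit Types T p y z k : R.

Lemma larger_root_ge T p z y :
  larger_root T p z -> y ^+ 2 - T * y + p <= 0 -> y <= z.
Proof.
case=> qz Tz qy; rewrite leNgt; apply/negP => zy.
have : 0 < (y - z) * (y - (T - z)) by apply: mulr_gt0; lra.
have -> : (y - z) * (y - (T - z)) = y ^+ 2 - T * y + p - (z ^+ 2 - T * z + p).
  by ring.
by rewrite qz subr0; lra.
Qed.

Lemma larger_root_unique T p y z :
  larger_root T p y -> larger_root T p z -> y = z.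
Proof.
move=> hy hz; apply/le_anti/andP; split.
- by apply: (larger_root_ge hz); rewrite hy.1.
- by apply: (larger_root_ge hy); rewrite hz.1.
Qed.

Lemma larger_root_Vieta z k : k <= z -> larger_root (z + k) (z * k) z.
Proof. by move=> kz; split; [ring | lra]. Qed.

End LargerRoot.

Lemma largest_eigenvalue_mx2 (R : realType) (A : 'M[R]_2) z :
  is_largest_eigenvalue A z -> larger_root (\tr A) (\det A) z.
Proof.
rewrite /is_largest_eigenvalue eigenvalue_mx2 => -[/eqP qz z_max]; split=> //.
have : eigenvalue A (\tr A - z) by rewrite eigenvalue_mx2 -qz; apply/eqP; ring.
by move/z_max; lra.
Qed.

Section Gmat.
Variables (R : realType) (mu lam t : R).
Hypotheses (mu_ge0 : 0 <= mu) (mu_le1 : mu <= 1).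

Local Notation e := (expR (t / 2)).
Local Notation g0 := (Num.sqrt (1 - mu)).
Local Notation g1 := (Num.sqrt mu).

Let e_sqr : e ^+ 2 = expR t.
Proof. by rewrite expr2 -expRD -splitr. Qed.
Let g0_sqr : g0 ^+ 2 = 1 - mu.
Proof. by rewrite sqr_sqrtr // subr_ge0. Qed.
Let g1_sqr : g1 ^+ 2 = mu.
Proof. by rewrite sqr_sqrtr. Qed.

Let GmatE i j : Gmat mu lam t i j =
  (if i == ord0 then 1 else e) * (if j == ord0 then 1 else e) *
  ((1 - lam) * (if i == ord0 then g0 else g1) * (if j == ord0 then g0 else g1)
   + lam * (i == j)%:R).
Proof.
by rewrite /Gmat /Dmat mul_diag_mx mul_mx_diag !mxE /gamma1 !big_ord1 !mxE; ring.
Qed.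

Lemma mxtrace_Gmat :
  \tr (Gmat mu lam t) = 1 - mu + mu * lam + expR t * (mu + (1 - mu) * lam).
Proof.
by rewrite mxtrace_mx2 !GmatE /= -!mulrA -!expr2 g0_sqr g1_sqr -e_sqr; ring.
Qed.

Lemma det_Gmat : \det (Gmat mu lam t) = lam * expR t.
Proof.
apply/eqP; rewrite det_mx2 !GmatE /= -e_sqr -subr_eq0; apply/eqP.
transitivity (e ^+ 2 * lam * (1 - lam) * (g0 ^+ 2 + g1 ^+ 2 - 1)); first ring.
by rewrite g0_sqr g1_sqr subrK subrr mulr0.
Qed.

Lemma Gmat_larger_root z : is_largest_eigenvalue (Gmat mu lam t) z ->
  larger_root (1 - mu + mu * lam + expR t * (mu + (1 - mu) * lam)) (lam * expR t) z.
Proof. by rewrite -mxtrace_Gmat -det_Gmat; exact: largest_eigenvalue_mx2. Qed.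

End Gmat.

Lemma expR_mul_le (R : realType) (x d : R) : 0 <= x -> x <= 1 ->
  expR (x * d) <= 1 - x + x * expR d.
Proof.
move=> x_ge0 x_le1; have := convex_expR (Itv01 x_ge0 x_le1) d 0.
by rewrite !convRE /= expR0 mulr0 addr0 mulr1 [1 - x + _]addrC.
Qed.

(* With [e^t = s e^d], the quadratic at [z e^(x d)] factors as [z e^(x d)] times a
   combination, with weights [z] and [k], of the chord defects of [expR] at [x] and [1 - x]. *)
Lemma larger_root_tilt (R : realType) (a b p s z k x t w : R) :
  0 < s -> 0 < z -> 0 <= k -> 0 <= x <= 1 ->
  z * k = p * s -> z * (1 - x) + k * x = a -> z * x + k * (1 - x) = s * b ->
  larger_root (a + expR t * b) (p * expR t) w -> z * expR (x * (t - ln s)) <= w.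
Proof.
move=> s_gt0 z_gt0 k_ge0 /andP[x_ge0 x_le1] zk za zb hw; apply: (larger_root_ge hw).
have : expR t = s * expR (t - ln s).
  by rewrite expRB lnK ?posrE // mulrC divfK ?gt_eqF.
move: (t - ln s) => d et.
have ed : expR d = expR (x * d) * expR ((1 - x) * d).
  by rewrite -expRD -mulrDl subrKC mul1r.
have hb : b = (z * x + k * (1 - x)) / s by rewrite zb; field; rewrite gt_eqF.
have hp : p = z * k / s by rewrite zk; field; rewrite gt_eqF.
have -> : (z * expR (x * d)) ^+ 2 - (a + expR t * b) * (z * expR (x * d)) + p * expR t
    = z * expR (x * d) * (z * (expR (x * d) - (1 - x) - x * expR d)
        + k * (expR ((1 - x) * d) - (1 - (1 - x)) - (1 - x) * expR d)).
  by rewrite -za hb hp et ed; field; rewrite gt_eqF.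
have h1 := expR_mul_le d x_ge0 x_le1.
have h2 : expR ((1 - x) * d) <= 1 - (1 - x) + (1 - x) * expR d.
  by apply: expR_mul_le; lra.
apply: mulr_ge0_le0; first by rewrite mulr_ge0 ?expR_ge0 // ltW.
by nra.
Qed.

Lemma sup_range_max (R : realType) (f : R -> R) t0 :
  (forall t, f t <= f t0) -> sup (range f) = f t0.
Proof.
move=> f_max; apply/le_anti/andP; split.
- by apply: ge_sup; [exists (f t0), t0 | move=> _ [t _ <-]].
- apply: sup_upper_bound; last by exists t0.
  by split; [exists (f t0), t0 | exists (f t0) => _ [t _ <-]].
Qed.

Section RateFunction.
Variables (R : realType) (mu lam x : R).
Hypotheses (mu_gt0 : 0 < mu) (mu_lt1 : mu < 1) (lam_ge0 : 0 <= lam) (lam_lt1 : lam < 1).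
Hypotheses (x_gt0 : 0 < x) (x_lt1 : x < 1).

Local Notation A := (1 - mu + mu * lam).
Local Notation B := (mu + (1 - mu) * lam).
Local Notation K := (mu * (1 - mu) * (1 - lam) ^+ 2).
Local Notation Delta := (1 + 4 * lam * x * (1 - x) / K).
Local Notation r := (Num.sqrt Delta).
Local Notation P := (r - (1 - x - x)).
Local Notation Q := (r + (1 - x - x)).
Local Notation s0 := (A * P / (B * Q)).
Local Notation z0 := (A * (r + 1) / Q).
Local Notation k0 := (A * (r - 1) / Q).

Let A_gt0 : 0 < A.
Proof.
have := mu_lt1; have : 0 <= mu * lam by rewrite mulr_ge0 // ltW.
lra.
Qed.
Let B_gt0 : 0 < B.
Proof.
have := mu_gt0; have : 0 <= (1 - mu) * lam by rewrite mulr_ge0 // subr_ge0 ltW.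
lra.
Qed.
Let K_gt0 : 0 < K.
Proof. by rewrite !mulr_gt0 ?exprn_gt0 ?subr_gt0. Qed.
Let Delta_ge1 : 1 <= Delta.
Proof. by rewrite lerDl divr_ge0 ?(ltW K_gt0) // !mulr_ge0 ?subr_ge0 // ltW. Qed.
Let r_sqr : r ^+ 2 = Delta.
Proof. by rewrite sqr_sqrtr //; apply: le_trans Delta_ge1. Qed.
Let r_ge1 : 1 <= r.
Proof. by rewrite -{1}(sqrtr1 R) ler_sqrt; [exact: Delta_ge1 | apply: le_trans Delta_ge1]. Qed.
Let P_gt0 : 0 < P. Proof. by have := r_ge1; have := x_gt0; lra. Qed.
Let Q_gt0 : 0 < Q. Proof. by have := r_ge1; have := x_lt1; lra. Qed.
Let s0_gt0 : 0 < s0. Proof. by rewrite divr_gt0 ?mulr_gt0. Qed.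
Let z0_gt0 : 0 < z0.
Proof. by rewrite divr_gt0 ?mulr_gt0 // (lt_le_trans ltr01 r_ge1) // ltrDl. Qed.
Let k0_ge0 : 0 <= k0.
Proof. by rewrite divr_ge0 ?mulr_ge0 ?subr_ge0 ?(ltW A_gt0) ?(ltW Q_gt0). Qed.
Let k0_le_z0 : k0 <= z0.
Proof. by rewrite ler_pM2r ?invr_gt0 // ler_pM2l //; lra. Qed.

Let lam_PQ : lam * (P * Q) = A * B * (r ^+ 2 - 1).
Proof.
have rK : (r ^+ 2 - 1) * K = 4 * lam * x * (1 - x).
  by rewrite r_sqr; field; rewrite !subr_eq0 !gt_eqF.
transitivity (lam * (r ^+ 2 - 1) + (r ^+ 2 - 1) * K).
  by rewrite rK; ring.
by ring.
Qed.

Let z0_k0 : z0 * k0 = lam * s0.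
Proof.
have -> : lam * s0 = A * (lam * (P * Q)) / (B * Q ^+ 2).
  by field; rewrite !gt_eqF.
by rewrite lam_PQ; field; rewrite !gt_eqF.
Qed.

Let avg_z0_k0_A : z0 * (1 - x) + k0 * x = A.
Proof. by field; rewrite gt_eqF. Qed.

Let avg_z0_k0_B : z0 * x + k0 * (1 - x) = s0 * B.
Proof. by field; rewrite !gt_eqF. Qed.

Let larger_root_t0 : larger_root (A + expR (ln s0) * B) (lam * expR (ln s0)) z0.
Proof.
rewrite lnK ?posrE // -z0_k0 -avg_z0_k0_B -[in X in X + _]avg_z0_k0_A.
have -> : z0 * (1 - x) + k0 * x + (z0 * x + k0 * (1 - x)) = z0 + k0 by ring.
exact: larger_root_Vieta.
Qed.

Local Notation rate :=
  (- x * ln (B / (1 - 2 * (1 - x) / (r + 1))) - (1 - x) * ln (A / (1 - 2 * x / (r + 1)))).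

Lemma rate_at_t0 w : larger_root (A + expR (ln s0) * B) (lam * expR (ln s0)) w ->
  ln s0 * x - ln w = rate.
Proof.
move=> hw; rewrite (larger_root_unique hw larger_root_t0).
have r1_gt0 : 0 < r + 1 by have := r_ge1; lra.
have -> : B / (1 - 2 * (1 - x) / (r + 1)) = B * (r + 1) / P.
  by field; rewrite !gt_eqF.
have -> : A / (1 - 2 * x / (r + 1)) = z0.
  by field; rewrite !gt_eqF.
rewrite !ln_div ?posrE ?mulr_gt0 // !lnM ?posrE //.
ring.
Qed.

Lemma rate_upper_bound t w : larger_root (A + expR t * B) (lam * expR t) w ->
  t * x - ln w <= rate.
Proof.
move=> hw; rewrite -(rate_at_t0 larger_root_t0).
have x01 : 0 <= x <= 1 by rewrite !ltW.
have tilt := larger_root_tilt s0_gt0 z0_gt0 k0_ge0 x01 z0_k0 avg_z0_k0_A avg_z0_k0_B hw.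
have tilt_gt0 : 0 < z0 * expR (x * (t - ln s0)) by rewrite mulr_gt0 ?expR_gt0.
have w_gt0 := lt_le_trans tilt_gt0 tilt.
move: tilt; rewrite -ler_ln ?posrE // lnM ?posrE ?expR_gt0 // expRK.
lra.
Qed.

End RateFunction.

Theorem mainTheorem3 (R : realType) (mu lam : R) (theta : R -> R) :
  0 < mu < 1 -> 0 <= lam < 1 ->
  (forall t : R, is_largest_eigenvalue (Gmat mu lam t) (theta t)) ->
  forall x : R, 0 < x < 1 ->
  let mub := 1 - mu in
  let xb := 1 - x in
  let Delta := 1 + 4 * lam * x * xb / (mu * mub * (1 - lam) ^+ 2) in
  let value :=
    - x * ln ((mu + mub * lam) / (1 - 2 * xb / (Num.sqrt Delta + 1)))
    - xb * ln ((mub + mu * lam) / (1 - 2 * x / (Num.sqrt Delta + 1))) in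
  let t0 := ln (((mub + mu * lam) * (Num.sqrt Delta - (xb - x)))
               / ((mu + mub * lam) * (Num.sqrt Delta + (xb - x)))) in
  I_theta theta x = value /\ t0 * x - ln (theta t0) = value.
Proof.
move=> /andP[mu_gt0 mu_lt1] /andP[lam_ge0 lam_lt1] theta_max x /andP[x_gt0 x_lt1].
move=> mub xb Delta value t0.
have theta_root t := Gmat_larger_root (ltW mu_gt0) (ltW mu_lt1) (theta_max t).
have rate_t0 : t0 * x - ln (theta t0) = value.
  exact (rate_at_t0 mu_gt0 mu_lt1 lam_ge0 lam_lt1 x_gt0 x_lt1 (theta_root t0)).
split=> //.
rewrite /I_theta (@sup_range_max _ (fun t => t * x - ln (theta t)) t0) // => t.
rewrite rate_t0.
exact (rate_upper_bound mu_gt0 mu_lt1 lam_ge0 lam_lt1 x_gt0 x_lt1 (theta_root t)).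
Qed.
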